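(* Let $\phi$ be a characteristic function and let $u\in\mathbb{R}\setminus\{0\}$ be such that $0<|\phi(u)|<1$. Let $\tilde\phi(u)\in\mathbb{C}$ be an arbitrary (possibly random) estimate of $\phi(u)$. Define $$\mathcal{Y}(u)=\log\bigl(-\log(|\phi(u)|^2)\bigr),\qquad \tilde{\mathcal{Y}}(u)=\log\bigl(-\log(T_{\omega_-,\omega_+}[|\tilde\phi|^2](u))\bigr),$$ $$\omega_\pm^*(u)=|\phi(u)|^2\Bigl(1\pm\frac{2|\log|\phi(u)||}{1+2|\log|\phi(u)||}\Bigr).$$ Then for any truncation levels $\omega_-(u),\omega_+(u)$ satisfying $$0<\omega_-(u)\le\omega_-^*(u)\le\omega_+^*(u)\le\omega_+(u)<1,$$ the following inequality holds with probability one: $$\bigl|\tilde{\mathcal{Y}}(u)-\mathcal{Y}(u)-\zeta_1(u)\bigl(|\tilde\phi(u)|^2-|\phi(u)|^2\bigr)\bigr|\le\zeta_2(u)\bigl(|\tilde\phi(u)|^2-|\phi(u)|^2\bigr)^2,$$ where $$\zeta_1(u)=2^{-1}|\phi(u)|^{-2}\log^{-1}(|\phi(u)|),\qquad \zeta_2(u)=2\max_{\xi\in\{\omega_-(u),\omega_+(u)\}}\Bigl[\frac{1+|\log\xi|}{\xi^2\log^2\xi}\Bigr].$$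
   Context: For truncation levels $0<\omega_-\le\omega_+<1$ and a real-valued function $f$, the truncation operator is $T_{\omega_-,\omega_+}[f](u)=\omega_+$ if $f(u)>\omega_+$, $=f(u)$ if $\omega_-\le f(u)\le\omega_+$, and $=\omega_-$ if $f(u)<\omega_-$ (the levels may depend on $u$). *)

From HB Require Import structures.
From mathcomp Require Import all_boot all_order all_algebra.
From mathcomp Require Import all_classical all_reals all_analysis.
Set Implicit Arguments. Unset Strict Implicit. Unset Printing Implicit Defensive.
Import Order.TTheory GRing.Theory Num.Theory.
Local Open Scope ring_scope.

Section Defs.
Variable R : realType.

(* Truncation operator T_{w-,w+}[f](u) applied to the value f(u) = x. *)
Definition trunc (wm wp x : R) : R :=
  if wp < x then wp else if x < wm then wm else x.

Definition charfun_re (P : probability R R) (u : R) : R :=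
  Rintegral P setT (fun x => cos (u * x)).
Definition charfun_im (P : probability R R) (u : R) : R :=
  Rintegral P setT (fun x => sin (u * x)).

Definition cmod (a b : R) : R := Num.sqrt (a ^+ 2 + b ^+ 2).

Definition charfun_abs (P : probability R R) (u : R) : R :=
  cmod (charfun_re P u) (charfun_im P u).

Definition calY (phiabs : R) : R := ln (- ln (phiabs ^+ 2)).
Definition calYt (wm wp phitabs : R) : R := ln (- ln (trunc wm wp (phitabs ^+ 2))).

Definition omega_minus_star (phiabs : R) : R :=
  phiabs ^+ 2 * (1 - 2 * `|ln phiabs| / (1 + 2 * `|ln phiabs|)).
Definition omega_plus_star (phiabs : R) : R :=
  phiabs ^+ 2 * (1 + 2 * `|ln phiabs| / (1 + 2 * `|ln phiabs|)).

Definition zeta1 (phiabs : R) : R := 2^-1 * (phiabs ^+ 2)^-1 * (ln phiabs)^-1.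
Definition zeta2_term (xi : R) : R := (1 + `|ln xi|) / (xi ^+ 2 * (ln xi) ^+ 2).
Definition zeta2 (wm wp : R) : R := 2 * Num.max (zeta2_term wm) (zeta2_term wp).
End Defs.

(* With lnln y := ln (- ln y) we have calY = lnln a, calYt = lnln (T[|tilde phi|^2])
   and zeta1 = lnln' a for a = |phi|^2.  Two mean value steps give the Taylor bound
   |lnln t - lnln a - lnln' a (t - a)| <= sup |lnln''| (t - a)^2 on [w-, w+], and
   |lnln''| <= zeta2_term <= zeta2 there because y ln y and y^2 ln y are maximal at
   an endpoint of a segment.  Outside [w-, w+] the truncation freezes lnln, so the
   error grows only linearly, with slope |lnln' a|; the levels omega*_(+-) are
   exactly a -+ |lnln' a| / zeta2_term a, which makes this linear growth dominated
   by the quadratic bound. *)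
From HB Require Import structures.
From mathcomp Require Import all_boot all_order all_algebra.
From mathcomp Require Import all_classical all_reals all_analysis.
From mathcomp Require Import ring lra.
Import Order.TTheory GRing.Theory Num.Theory.
Set Implicit Arguments. Unset Strict Implicit.
Local Open Scope ring_scope.

Section TruncatedTaylor.
Variable R : realType.
Implicit Types (f df : R -> R) (a t x y lo hi wm wp : R).

Lemma MVT_le f df a b : a <= b ->
  (forall x, a <= x <= b -> is_derive x 1 f (df x)) ->
  exists2 c, a <= c <= b & f b - f a = df c * (b - a).
Proof.
move=> ab hd.
have dercc : {in `[a, b], forall x, derivable f x 1}.
  by move=> x; rewrite in_itv /= => /hd [].
have [c] := MVT_segment ab (fun x xab => hd x (subset_itv_oo_cc xab))
  (derivable_within_continuous dercc).
by rewrite in_itv /=; exists c.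
Qed.

Lemma MVT_between f df lo hi y1 y2 :
  (forall x, lo <= x <= hi -> is_derive x 1 f (df x)) ->
  lo <= y1 <= hi -> lo <= y2 <= hi ->
  exists c, [/\ lo <= c <= hi, `|c - y1| <= `|y2 - y1|
              & f y2 - f y1 = df c * (y2 - y1)].
Proof.
move=> hd /andP[lo_y1 y1_hi] /andP[lo_y2 y2_hi].
have hd_in a b : lo <= a -> b <= hi ->
    forall x, a <= x <= b -> is_derive x 1 f (df x).
  move=> lo_a b_hi x /andP[ax xb].
  by apply: hd; rewrite (le_trans lo_a ax) (le_trans xb b_hi).
have [y12|y21] := lerP y1 y2.
- have [c /andP[c1 c2] E] := MVT_le y12 (hd_in _ _ lo_y1 y2_hi).
  exists c; split => //; first by rewrite (le_trans lo_y1 c1) (le_trans c2 y2_hi).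
  by rewrite !ger0_norm ?subr_ge0 //; lra.
- have [c /andP[c1 c2] E] := MVT_le (ltW y21) (hd_in _ _ lo_y2 y1_hi).
  exists c; split; first by rewrite (le_trans lo_y2 c1) (le_trans c2 y1_hi).
  + by rewrite !ler0_norm ?subr_le0 //; lra.
  + by rewrite -opprB E; ring.
Qed.

(* The sign condition on df makes f quasiconvex on [lo, hi]. *)
Lemma le_max_endpoints f df lo hi y :
  (forall x, lo <= x <= hi -> is_derive x 1 f (df x)) ->
  (forall x z, lo <= x -> x <= z -> z <= hi -> 0 <= df x -> 0 <= df z) ->
  lo <= y <= hi -> f y <= Num.max (f lo) (f hi).
Proof.
move=> hd hsign /andP[lo_y y_hi]; rewrite le_max.
have [dy|dy] := lerP 0 (df y).
- have hd' x : y <= x <= hi -> is_derive x 1 f (df x).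
    by case/andP=> yx xhi; apply: hd; rewrite (le_trans lo_y yx) xhi.
  have [c /andP[y_c c_hi] E] := MVT_le y_hi hd'.
  have dc := hsign _ _ lo_y y_c c_hi dy.
  by apply/orP; right; rewrite -subr_ge0 E mulr_ge0 ?subr_ge0.
- have hd' x : lo <= x <= y -> is_derive x 1 f (df x).
    by case/andP=> lox xy; apply: hd; rewrite lox (le_trans xy y_hi).
  have [c /andP[lo_c c_y] E] := MVT_le lo_y hd'.
  have dc : df c < 0.
    by rewrite ltNge; apply/negP => dc; have := hsign _ _ lo_c c_y y_hi dc; lra.
  by apply/orP; left; rewrite -subr_le0 E nmulr_rle0 // subr_ge0.
Qed.

Lemma is_derive_xlnx y : 0 < y -> is_derive y 1 (fun y => y * ln y) (1 + ln y).
Proof.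
move=> y0; have H := is_deriveM (is_derive_id y 1) (is_derive1_ln y0).
apply: (is_derive_eq H); rewrite /GRing.scale /= mulr1 mulfV ?gt_eqF // addrC.
Qed.

Lemma is_derive_x2lnx y :
  0 < y -> is_derive y 1 (fun y => y * (y * ln y)) (y * (1 + 2 * ln y)).
Proof.
move=> y0; have H := is_deriveM (is_derive_id y 1) (is_derive_xlnx y0).
by apply: (is_derive_eq H); rewrite /GRing.scale /=; ring.
Qed.

Lemma taylor_remainder_le f df d2f lo hi M a t :
  (forall x, lo <= x <= hi -> is_derive x 1 f (df x)) ->
  (forall x, lo <= x <= hi -> is_derive x 1 df (d2f x)) ->
  (forall x, lo <= x <= hi -> `|d2f x| <= M) ->
  lo <= a <= hi -> lo <= t <= hi ->
  `|f t - f a - df a * (t - a)| <= M * (t - a) ^+ 2.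
Proof.
move=> hf hdf hM ha ht.
have [xi [hxi dist E1]] := MVT_between hf ha ht.
have [eta [heta _ E2]] := MVT_between hdf ha hxi.
have -> : f t - f a - df a * (t - a) = d2f eta * (xi - a) * (t - a).
  by rewrite E1 -E2; ring.
rewrite !normrM -[_ ^+ 2]real_normK ?num_real // expr2 mulrA.
by apply: ler_wpM2r => //; apply: ler_pM => //; apply: hM.
Qed.

Lemma linear_extension_le (e s Z d delta : R) :
  0 <= Z -> 0 <= delta -> `|e| <= Z * d ^+ 2 -> `|s| <= Z * d ->
  `|e + s * delta| <= Z * (d + delta) ^+ 2.
Proof.
move=> Z0 delta0 he hs.
have hsd : `|s * delta| <= Z * d * delta.
  by rewrite normrM (ger0_norm delta0) ler_wpM2r.
have Zd_delta : 0 <= Z * d * delta := le_trans (normr_ge0 _) hsd.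
have Zdelta2 : 0 <= Z * delta ^+ 2 by rewrite mulr_ge0 ?sqr_ge0.
apply: le_trans (ler_normD _ _) _.
have -> : Z * (d + delta) ^+ 2 = Z * d ^+ 2 + 2 * (Z * d * delta) + Z * delta ^+ 2.
  by ring.
lra.
Qed.

Lemma trunc_taylor_remainder_le (h : R -> R) (s Z : R) a wm wp x :
  0 <= Z -> wm <= a <= wp ->
  (forall t, wm <= t <= wp -> `|h t - h a - s * (t - a)| <= Z * (t - a) ^+ 2) ->
  `|s| <= Z * (a - wm) -> `|s| <= Z * (wp - a) ->
  `|h (trunc wm wp x) - h a - s * (x - a)| <= Z * (x - a) ^+ 2.
Proof.
move=> Z0 /andP[wm_a a_wp] hT s_wm s_wp; have wm_wp := le_trans wm_a a_wp.
rewrite /trunc; have [wp_x|x_wp] := ltrP wp x; last have [x_wm|wm_x] := ltrP x wm.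
- have -> : h wp - h a - s * (x - a) = h wp - h a - s * (wp - a) + (- s) * (x - wp).
    by ring.
  rewrite (_ : x - a = wp - a + (x - wp)); last by ring.
  apply: linear_extension_le; rewrite ?normrN //; first lra.
  by apply: hT; rewrite wm_wp lexx.
- have -> : h wm - h a - s * (x - a) = h wm - h a - s * (wm - a) + s * (wm - x).
    by ring.
  rewrite (_ : x - a = - (a - wm + (wm - x))) ?sqrrN; last by ring.
  apply: linear_extension_le => //; first lra.
  by rewrite -sqrrN opprB; apply: hT; rewrite lexx wm_wp.
- by apply: hT; rewrite wm_x x_wp.
Qed.

End TruncatedTaylor.

Section LogMinusLog.
Variable R : realType.
Implicit Types (a s t y wm wp : R).

Definition lnln y := ln (- ln y).
Definition lnln' y := (y * ln y)^-1.
Definition lnln'' y := - (1 + ln y) / (y * ln y) ^+ 2.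

Lemma is_derive_lnln y : 0 < y < 1 -> is_derive y 1 lnln (lnln' y).
Proof.
move=> /andP[y0 y1]; have lny0 : ln y < 0 by rewrite ln_lt0 // y0.
have dNln : is_derive y 1 (fun y => - ln y) (- y^-1).
  exact/is_deriveN/is_derive1_ln.
have dln : is_derive (- ln y) 1 (@ln R) ((- ln y)^-1).
  by apply: is_derive1_ln; rewrite oppr_gt0.
have H := @is_derive1_comp R (@ln R) (fun y => - ln y) y _ _ dln dNln.
apply: (is_derive_eq H).
by rewrite /lnln' invrN mulrN mulNr opprK invfM mulrC.
Qed.

Lemma is_derive_lnln' y : 0 < y < 1 -> is_derive y 1 lnln' (lnln'' y).
Proof.
move=> /andP[y0 y1]; have lny0 : ln y < 0 by rewrite ln_lt0 // y0.
have ylny_neq0 : y * ln y != 0 by rewrite mulf_eq0 negb_or gt_eqF ?lt_eqF.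
have H := @is_deriveV R (fun y => y * ln y) y _ _ ylny_neq0 (is_derive_xlnx y0).
apply: (is_derive_eq H).
by rewrite /GRing.scale /= /lnln'' mulrC mulNr mulrN.
Qed.

Lemma norm_lnln''_le y : `|lnln'' y| <= zeta2_term y.
Proof.
rewrite /lnln'' /zeta2_term normrM normrN normfV [`|_ ^+ 2|]ger0_norm ?sqr_ge0 //.
rewrite exprMn ler_wpM2r ?invr_ge0 ?(mulr_ge0 (sqr_ge0 _) (sqr_ge0 _)) //.
by rewrite -{2}normr1 ler_normD.
Qed.

Lemma zeta2_termE y : 0 < y < 1 ->
  zeta2_term y = ((y * ln y) ^+ 2)^-1 + (- (y * (y * ln y)))^-1.
Proof.
move=> /andP[y0 y1]; have lny0 : ln y < 0 by rewrite ln_lt0 // y0.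
rewrite /zeta2_term ltr0_norm //; field.
by rewrite lt_eqF // gt_eqF.
Qed.

Lemma zeta2_term_gt0 y : 0 < y < 1 -> 0 < zeta2_term y.
Proof.
move=> /andP[y0 y1]; have lny0 : ln y < 0 by rewrite ln_lt0 // y0.
apply: divr_gt0; first by have := normr_ge0 (ln y); lra.
by apply: mulr_gt0; [exact: exprn_gt0 | rewrite expr2; nra].
Qed.

Lemma zeta2_term_le_zeta2 wm wp y :
  0 < wm -> wm <= y <= wp -> wp < 1 -> zeta2_term y <= zeta2 wm wp.
Proof.
move=> wm0 /andP[wm_y y_wp] wp1.
have in01 x : wm <= x -> x <= wp -> 0 < x < 1.
  by move=> wm_x x_wp; rewrite (lt_le_trans wm0 wm_x) (le_lt_trans x_wp wp1).
have [y01 wm01 wp01] : [/\ 0 < y < 1, 0 < wm < 1 & 0 < wp < 1].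
  by split; apply: in01; rewrite ?lexx // (le_trans wm_y y_wp).
have ln_le x z : wm <= x -> x <= z -> ln x <= ln z.
  by move=> wm_x xz; rewrite ler_ln ?posrE ?(lt_le_trans wm0) ?(le_trans wm_x).
have xlnx_max : y * ln y <= Num.max (wm * ln wm) (wp * ln wp).
  apply: (le_max_endpoints (f := fun x => x * ln x) (df := fun x => 1 + ln x)).
  - by move=> x /andP[wm_x _]; apply/is_derive_xlnx/(lt_le_trans wm0).
  - by move=> x z wm_x xz _ /le_trans; apply; rewrite lerD2l ln_le.
  - by rewrite wm_y.
have x2lnx_max :
    y * (y * ln y) <= Num.max (wm * (wm * ln wm)) (wp * (wp * ln wp)).
  apply: (le_max_endpoints (f := fun x => x * (x * ln x))
                           (df := fun x => x * (1 + 2 * ln x))).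
  - by move=> x /andP[wm_x _]; apply/is_derive_x2lnx/(lt_le_trans wm0).
  - move=> x z wm_x xz _; have x0 := lt_le_trans wm0 wm_x.
    rewrite pmulr_rge0 // => /le_trans/(_ (_ : _ <= 1 + 2 * ln z)) h.
    by rewrite mulr_ge0 ?h ?lerD2l ?ler_pM2l ?ln_le // ltW // (lt_le_trans x0 xz).
  - by rewrite wm_y.
have inv_xlnx_le w : 0 < w < 1 -> y * ln y <= w * ln w ->
    ((y * ln y) ^+ 2)^-1 <= zeta2_term w.
  move=> w01 h; have /andP[w0 _] := w01; have /andP[y0 _] := y01.
  have [lny lnw] := (ln_lt0 y01, ln_lt0 w01).
  have [qy qw] : y * ln y < 0 /\ w * ln w < 0 by rewrite !pmulr_rlt0.
  rewrite zeta2_termE // -[X in X <= _]addr0 lerD //; last by rewrite invr_ge0; nra.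
  by rewrite lef_pV2 ?posrE; nra.
have inv_x2lnx_le w : 0 < w < 1 -> y * (y * ln y) <= w * (w * ln w) ->
    (- (y * (y * ln y)))^-1 <= zeta2_term w.
  move=> w01 h; have /andP[w0 _] := w01; have /andP[y0 _] := y01.
  have [lny lnw] := (ln_lt0 y01, ln_lt0 w01).
  have [qy qw] : y * ln y < 0 /\ w * ln w < 0 by rewrite !pmulr_rlt0.
  rewrite zeta2_termE // -[X in X <= _]add0r lerD //; first by rewrite invr_ge0; nra.
  by rewrite lef_pV2 ?posrE; nra.
rewrite zeta2_termE // /zeta2 mulr2n mulrDl mul1r.
apply: lerD; rewrite le_max.
- move: xlnx_max; rewrite le_max => /orP[] /inv_xlnx_le-> //; exact: orbT.
- move: x2lnx_max; rewrite le_max => /orP[] /inv_x2lnx_le-> //; exact: orbT.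
Qed.

Lemma lnln_taylor_le wm wp a t :
  0 < wm -> wp < 1 -> wm <= a <= wp -> wm <= t <= wp ->
  `|lnln t - lnln a - lnln' a * (t - a)| <= zeta2 wm wp * (t - a) ^+ 2.
Proof.
move=> wm0 wp1; have in01 x : wm <= x <= wp -> 0 < x < 1.
  by case/andP=> wm_x x_wp; rewrite (lt_le_trans wm0 wm_x) (le_lt_trans x_wp wp1).
apply: taylor_remainder_le => x hx; first exact/is_derive_lnln/in01.
  exact/is_derive_lnln'/in01.
exact: le_trans (norm_lnln''_le x) (zeta2_term_le_zeta2 wm0 hx wp1).
Qed.

Lemma zeta1E s : 0 < s < 1 -> zeta1 s = lnln' (s ^+ 2).
Proof.
move=> /andP[s0 s1]; have lns0 : ln s < 0 by rewrite ln_lt0 // s0.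
rewrite /zeta1 /lnln' lnXn // -mulr_natl; field.
by rewrite lt_eqF // gt_eqF.
Qed.

Lemma norm_lnln'_sqr s : 0 < s < 1 ->
  `|lnln' (s ^+ 2)| = zeta2_term (s ^+ 2) * (s ^+ 2 - omega_minus_star s).
Proof.
move=> /andP[s0 s1]; have lns0 : ln s < 0 by rewrite ln_lt0 // s0.
have ln2 : ln (s ^+ 2) = 2 * ln s by rewrite lnXn // mulr_natl.
rewrite /lnln' /zeta2_term /omega_minus_star ln2 !ltr0_norm ?pmulr_rlt0 //.
  have D_neq0 : 1 + 2 * - ln s != 0 by rewrite gt_eqF //; lra.
  by field; rewrite D_neq0 lt_eqF // gt_eqF.
by rewrite invr_lt0 pmulr_rlt0 ?exprn_gt0 ?pmulr_rlt0.
Qed.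

End LogMinusLog.

Theorem lemma6p1 (R : realType) (P : probability R R) (u : R)
    (phit_re phit_im : R) (wm wp : R) :
  u != 0 ->
  0 < charfun_abs P u -> charfun_abs P u < 1 ->
  0 < wm -> wm <= omega_minus_star (charfun_abs P u) ->
  omega_minus_star (charfun_abs P u) <= omega_plus_star (charfun_abs P u) ->
  omega_plus_star (charfun_abs P u) <= wp -> wp < 1 ->
  let phiabs := charfun_abs P u in
  let phitabs := cmod phit_re phit_im in
  `| calYt wm wp phitabs - calY phiabs
       - zeta1 phiabs * (phitabs ^+ 2 - phiabs ^+ 2) |
    <= zeta2 wm wp * (phitabs ^+ 2 - phiabs ^+ 2) ^+ 2.
Proof.
(* u != 0 is irrelevant here, and omega*_- <= omega*_+ holds automatically. *)
move=> _ s0 s1 wm0 wm_om _ op_wp wp1; rewrite [X in is_true X]/=.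
set s := charfun_abs P u.
have s01 : 0 < s < 1 by rewrite s0 s1.
have a01 : 0 < s ^+ 2 < 1 by rewrite exprn_gt0 //= expr_lt1 ?ltW.
have slope := norm_lnln'_sqr s01.
have omega_sym : omega_plus_star s - s ^+ 2 = s ^+ 2 - omega_minus_star s.
  by rewrite /omega_plus_star /omega_minus_star; ring.
have zeta2_pos := zeta2_term_gt0 a01.
have om_a : omega_minus_star s <= s ^+ 2.
  by rewrite -subr_ge0 -(pmulr_rge0 _ zeta2_pos) -slope.
have a_op : s ^+ 2 <= omega_plus_star s by rewrite -subr_ge0 omega_sym subr_ge0.
have ha : wm <= s ^+ 2 <= wp by rewrite (le_trans wm_om om_a) (le_trans a_op op_wp).
have zeta2_le := zeta2_term_le_zeta2 wm0 ha wp1.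
rewrite zeta1E //; apply: (trunc_taylor_remainder_le (h := @lnln R)) => //.
- exact: le_trans (ltW zeta2_pos) zeta2_le.
- by move=> t ht; apply: lnln_taylor_le.
- by rewrite slope ler_pM ?subr_ge0 ?lerD2l ?lerN2 // ltW.
- by rewrite slope -omega_sym ler_pM ?subr_ge0 ?lerD2r // ltW.
Qed.
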